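(* For all $\alpha\in(0,1)$ and all integers $s=1,2,3,\dots$, $$\frac{1-\alpha}{(s+1)^\alpha}<a_s<\frac{1-\alpha}{s^\alpha},\qquad \frac{\alpha(1-\alpha)}{(s+2)^{\alpha+1}}<a_s-a_{s+1}<\frac{\alpha(1-\alpha)}{s^{\alpha+1}},\qquad \frac{\alpha(1-\alpha)}{12(s+1)^{\alpha+1}}<b_s<\frac{\alpha(1-\alpha)}{12 s^{\alpha+1}}.$$
   Context: For $l\ge 0$: $a_l=a_l^{(\alpha)}=(l+1)^{1-\alpha}-l^{1-\alpha}$ and $b_l=b_l^{(\alpha)}=\frac{1}{2-\alpha}\left[(l+1)^{2-\alpha}-l^{2-\alpha}\right]-\frac12\left[(l+1)^{1-\alpha}+l^{1-\alpha}\right]$. *)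

From Stdlib Require Import Reals.
Open Scope R_scope.

(* x^p for x >= 0 and real p > 0; we set 0^p = 0 (Rpower 0 p would be 1). *)
Definition rpow (x p : R) : R := if Rle_dec x 0 then 0 else Rpower x p.

Definition a_coef (alpha : R) (l : nat) : R :=
  rpow (INR l + 1) (1 - alpha) - rpow (INR l) (1 - alpha).

Definition b_coef (alpha : R) (l : nat) : R :=
  / (2 - alpha) * (rpow (INR l + 1) (2 - alpha) - rpow (INR l) (2 - alpha))
  - / 2 * (rpow (INR l + 1) (1 - alpha) + rpow (INR l) (1 - alpha)).

From Stdlib Require Import Reals Lra Lia.
From Coquelicot Require Import Coquelicot.
Open Scope R_scope.

(* Put phi(x) = x^(1-alpha) and Phi(x) = x^(2-alpha)/(2-alpha).  Then a_s = phi(s+1) - phi(s),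
   a_s - a_(s+1) = -(phi(s) - 2 phi(s+1) + phi(s+2)), and b_s = Phi(s+1) - Phi(s)
   - (phi(s) + phi(s+1))/2 is the error of the trapezoid rule for the integral of phi over
   [s, s+1].  The mean value theorem writes the first two as phi'(xi) and -phi''(xi) with xi in
   (s, s+1), resp. (s, s+2), and the trapezoid error lies strictly between -phi''(s+1)/12 and
   -phi''(s)/12: if E(x) is the trapezoid error over [s, x], then E(x) + K (x-s)^3/12 vanishes
   together with its derivative at s and has second derivative (x-s)(K - phi''(x))/2.  All bounds
   follow because phi'(x) = (1-alpha) x^(-alpha) and -phi''(x) = alpha(1-alpha) x^(-alpha-1) are
   strictly decreasing. *)

Lemma MVT_is_derive (f df : R -> R) (a b : R) : a < b ->
  (forall x, a <= x <= b -> is_derive f x (df x)) ->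
  exists c, a < c < b /\ f b - f a = df c * (b - a).
Proof.
  intros Hab Hf.
  destruct (MVT_cor2 f df a b Hab) as [c [Ec Hc]].
  - intros x Hx. apply is_derive_Reals, Hf, Hx.
  - exists c. split; assumption.
Qed.

Lemma is_derive_shift (f : R -> R) (x h l : R) :
  is_derive f (x + h) l -> is_derive (fun y => f (y + h)) x l.
Proof.
  intros Hf.
  replace l with (scal 1 l) by apply Rmult_1_l.
  apply (is_derive_comp f (fun y => y + h)); [exact Hf|].
  auto_derive; [exact I | ring].
Qed.

Lemma second_difference_MVT (f df d2f : R -> R) (a : R) :
  (forall x, a <= x <= a + 2 -> is_derive f x (df x)) ->
  (forall x, a <= x <= a + 2 -> is_derive df x (d2f x)) ->
  exists c, a < c < a + 2 /\ f a - 2 * f (a + 1) + f (a + 2) = d2f c.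
Proof.
  intros Hf Hdf.
  destruct (MVT_is_derive (fun y => f (y + 1) - f y) (fun y => df (y + 1) - df y) a (a + 1))
    as [c [Hc Ec]].
  - lra.
  - intros x Hx. apply (is_derive_minus (fun y => f (y + 1)) f).
    + apply is_derive_shift, Hf. lra.
    + apply Hf. lra.
  - destruct (MVT_is_derive df d2f c (c + 1)) as [d [Hd Ed]].
    + lra.
    + intros x Hx. apply Hdf. lra.
    + exists d. split; [lra|].
      replace (a + 2) with (a + 1 + 1) by ring. nra.
Qed.

Lemma pos_of_deriv2_pos (g dg d2g : R -> R) (a b : R) : a < b ->
  (forall x, a <= x <= b -> is_derive g x (dg x)) ->
  (forall x, a <= x <= b -> is_derive dg x (d2g x)) ->
  g a = 0 -> dg a = 0 -> (forall x, a < x < b -> 0 < d2g x) -> 0 < g b.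
Proof.
  intros Hab Hg Hdg g0 dg0 Hpos.
  destruct (MVT_is_derive g dg a b Hab Hg) as [c [Hc Ec]].
  destruct (MVT_is_derive dg d2g a c) as [d [Hd Ed]].
  - lra.
  - intros x Hx. apply Hdg. lra.
  - assert (0 < d2g d) by (apply Hpos; lra).
    assert (0 < dg c) by nra.
    nra.
Qed.

Definition trapezoid_error (F f : R -> R) (a b : R) : R :=
  F b - F a - (b - a) * (f a + f b) / 2.

Lemma trapezoid_error_gt (F f df d2f : R -> R) (a b m : R) : a < b ->
  (forall x, a <= x <= b -> is_derive F x (f x)) ->
  (forall x, a <= x <= b -> is_derive f x (df x)) ->
  (forall x, a <= x <= b -> is_derive df x (d2f x)) ->
  (forall x, a < x < b -> d2f x < m) ->
  - m * (b - a) ^ 3 / 12 < trapezoid_error F f a b.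
Proof.
  intros Hab HF Hf Hdf Hm.
  cut (0 < trapezoid_error F f a b + m * (b - a) ^ 3 / 12); [lra|].
  apply (pos_of_deriv2_pos (fun x => trapezoid_error F f a x + m * (x - a) ^ 3 / 12)
    (fun x => (f x - f a) / 2 - (x - a) * df x / 2 + m * (x - a) ^ 2 / 4)
    (fun x => (x - a) * (m - d2f x) / 2) a b Hab).
  - intros x Hx. specialize (HF x Hx). specialize (Hf x Hx).
    unfold trapezoid_error. auto_derive.
    + split; [eexists; exact HF | split; [eexists; exact Hf | exact I]].
    + rewrite (is_derive_unique (fun y : R => F y) _ _ HF).
      rewrite (is_derive_unique (fun y : R => f y) _ _ Hf). field.
  - intros x Hx. specialize (Hf x Hx). specialize (Hdf x Hx). auto_derive.
    + split; [eexists; exact Hf | split; [eexists; exact Hdf | exact I]].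
    + rewrite (is_derive_unique (fun y : R => f y) _ _ Hf).
      rewrite (is_derive_unique (fun y : R => df y) _ _ Hdf). field.
  - unfold trapezoid_error. field.
  - field.
  - intros x Hx. specialize (Hm x Hx).
    apply Rdiv_lt_0_compat; [apply Rmult_lt_0_compat|]; lra.
Qed.

Lemma trapezoid_error_lt (F f df d2f : R -> R) (a b M : R) : a < b ->
  (forall x, a <= x <= b -> is_derive F x (f x)) ->
  (forall x, a <= x <= b -> is_derive f x (df x)) ->
  (forall x, a <= x <= b -> is_derive df x (d2f x)) ->
  (forall x, a < x < b -> M < d2f x) ->
  trapezoid_error F f a b < - M * (b - a) ^ 3 / 12.
Proof.
  intros Hab HF Hf Hdf HM.
  assert (Hneg : - - M * (b - a) ^ 3 / 12 <
    trapezoid_error (fun x => - F x) (fun x => - f x) a b).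
  { apply (trapezoid_error_gt _ _ (fun x => - df x) (fun x => - d2f x)); try assumption.
    - intros x Hx. exact (is_derive_opp _ _ _ (HF x Hx)).
    - intros x Hx. exact (is_derive_opp _ _ _ (Hf x Hx)).
    - intros x Hx. exact (is_derive_opp _ _ _ (Hdf x Hx)).
    - intros x Hx. specialize (HM x Hx). lra. }
  unfold trapezoid_error in *. lra.
Qed.

Lemma rpow_Rpower (x p : R) : 0 < x -> rpow x p = Rpower x p.
Proof. intros Hx. unfold rpow. destruct (Rle_dec x 0); [lra | reflexivity]. Qed.

Lemma Rpower_gt_0 (x p : R) : 0 < Rpower x p.
Proof. apply exp_pos. Qed.

Lemma is_derive_Rpower (p x : R) : 0 < x ->
  is_derive (fun y => Rpower y p) x (p * Rpower x (p - 1)).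
Proof. intros Hx. apply is_derive_Reals, derivable_pt_lim_power, Hx. Qed.

Lemma is_derive_inv_Rpower (p x : R) : 0 < x ->
  is_derive (fun y => / Rpower y p) x (- p / Rpower x (p + 1)).
Proof.
  intros Hx.
  apply (is_derive_ext (fun y => Rpower y (- p))); [intros y; apply Rpower_Ropp|].
  replace (- p / Rpower x (p + 1)) with (- p * Rpower x (- p - 1)).
  - apply is_derive_Rpower, Hx.
  - replace (- p - 1) with (- (p + 1)) by ring. rewrite Rpower_Ropp. reflexivity.
Qed.

Lemma Rdiv_Rpower_lt_contravar (c p x y : R) : 0 < c -> 0 < p -> 0 < x < y ->
  c / Rpower y p < c / Rpower x p.
Proof.
  intros Hc Hp Hxy. apply Rmult_lt_compat_l; [exact Hc|].
  apply Rinv_0_lt_contravar; [apply Rpower_gt_0 | apply Rlt_Rpower_l; assumption].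
Qed.

Section PowerOneMinusAlpha.

Variable alpha : R.

Definition phi (y : R) : R := Rpower y (1 - alpha).
Definition dphi (y : R) : R := (1 - alpha) / Rpower y alpha.
Definition d2phi (y : R) : R := - (alpha * (1 - alpha)) / Rpower y (alpha + 1).
Definition Phi (y : R) : R := / (2 - alpha) * Rpower y (2 - alpha).

Lemma is_derive_Phi (x : R) : alpha < 2 -> 0 < x -> is_derive Phi x (phi x).
Proof.
  intros Ha Hx.
  replace (phi x) with (/ (2 - alpha) * ((2 - alpha) * Rpower x (2 - alpha - 1))).
  - apply is_derive_scal, is_derive_Rpower, Hx.
  - unfold phi. replace (2 - alpha - 1) with (1 - alpha) by ring. field. lra.
Qed.

Lemma is_derive_phi (x : R) : 0 < x -> is_derive phi x (dphi x).
Proof.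
  intros Hx.
  replace (dphi x) with ((1 - alpha) * Rpower x (1 - alpha - 1)).
  - apply is_derive_Rpower, Hx.
  - unfold dphi. replace (1 - alpha - 1) with (- alpha) by ring.
    rewrite Rpower_Ropp. reflexivity.
Qed.

Lemma is_derive_dphi (x : R) : 0 < x -> is_derive dphi x (d2phi x).
Proof.
  intros Hx.
  replace (d2phi x) with ((1 - alpha) * (- alpha / Rpower x (alpha + 1))).
  - apply is_derive_scal, is_derive_inv_Rpower, Hx.
  - unfold d2phi. field. apply Rgt_not_eq, Rpower_gt_0.
Qed.

Hypothesis alpha_bounds : 0 < alpha < 1.

Lemma d2phi_increasing (x y : R) : 0 < x < y -> d2phi x < d2phi y.
Proof.
  intros Hxy. unfold d2phi. rewrite !Rdiv_opp_l.
  apply Ropp_lt_contravar, Rdiv_Rpower_lt_contravar; [nra | lra | exact Hxy].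
Qed.

Lemma forward_difference_phi_bounds (s : R) : 0 < s ->
  (1 - alpha) / Rpower (s + 1) alpha < phi (s + 1) - phi s < (1 - alpha) / Rpower s alpha.
Proof.
  intros Hs.
  destruct (MVT_is_derive phi dphi s (s + 1)) as [c [Hc Ec]].
  - lra.
  - intros x Hx. apply is_derive_phi. lra.
  - replace (phi (s + 1) - phi s) with (dphi c) by (rewrite Ec; ring).
    unfold dphi. split; apply Rdiv_Rpower_lt_contravar; lra.
Qed.

Lemma second_difference_phi_bounds (s : R) : 0 < s ->
  alpha * (1 - alpha) / Rpower (s + 2) (alpha + 1)
    < (phi (s + 1) - phi s) - (phi (s + 2) - phi (s + 1))
    < alpha * (1 - alpha) / Rpower s (alpha + 1).
Proof.
  intros Hs.
  destruct (second_difference_MVT phi dphi d2phi s) as [c [Hc Ec]].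
  - intros x Hx. apply is_derive_phi. lra.
  - intros x Hx. apply is_derive_dphi. lra.
  - replace ((phi (s + 1) - phi s) - (phi (s + 2) - phi (s + 1))) with (- d2phi c) by lra.
    unfold d2phi. rewrite Rdiv_opp_l, Ropp_involutive.
    split; apply Rdiv_Rpower_lt_contravar; nra.
Qed.

Lemma trapezoid_error_phi_bounds (s : R) : 0 < s ->
  alpha * (1 - alpha) / (12 * Rpower (s + 1) (alpha + 1))
    < trapezoid_error Phi phi s (s + 1)
    < alpha * (1 - alpha) / (12 * Rpower s (alpha + 1)).
Proof.
  intros Hs.
  assert (HPhi : forall x, s <= x <= s + 1 -> is_derive Phi x (phi x))
    by (intros x Hx; apply is_derive_Phi; lra).
  assert (Hphi : forall x, s <= x <= s + 1 -> is_derive phi x (dphi x))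
    by (intros x Hx; apply is_derive_phi; lra).
  assert (Hdphi : forall x, s <= x <= s + 1 -> is_derive dphi x (d2phi x))
    by (intros x Hx; apply is_derive_dphi; lra).
  assert (Hend : forall y, 0 < y ->
    alpha * (1 - alpha) / (12 * Rpower y (alpha + 1)) = - d2phi y * (s + 1 - s) ^ 3 / 12).
  { intros y Hy. unfold d2phi. field. apply Rgt_not_eq, Rpower_gt_0. }
  rewrite !Hend by lra. split.
  - apply (trapezoid_error_gt _ _ dphi d2phi); try assumption; [lra|].
    intros x Hx. apply d2phi_increasing. lra.
  - apply (trapezoid_error_lt _ _ dphi d2phi); try assumption; [lra|].
    intros x Hx. apply d2phi_increasing. lra.
Qed.

End PowerOneMinusAlpha.

Lemma a_coef_phi_difference (alpha : R) (l : nat) : (0 < l)%nat ->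
  a_coef alpha l = phi alpha (INR l + 1) - phi alpha (INR l).
Proof.
  intros Hl. assert (0 < INR l) by (apply lt_0_INR; exact Hl).
  unfold a_coef, phi. rewrite !rpow_Rpower by lra. reflexivity.
Qed.

Lemma b_coef_trapezoid_error (alpha : R) (l : nat) : (0 < l)%nat ->
  b_coef alpha l = trapezoid_error (Phi alpha) (phi alpha) (INR l) (INR l + 1).
Proof.
  intros Hl. assert (0 < INR l) by (apply lt_0_INR; exact Hl).
  unfold b_coef, trapezoid_error, Phi, phi. rewrite !rpow_Rpower by lra. unfold Rdiv. ring.
Qed.

Theorem lemma2 (alpha : R) (s : nat) :
  0 < alpha < 1 -> (1 <= s)%nat ->
  ((1 - alpha) / Rpower (INR s + 1) alpha < a_coef alpha s
     < (1 - alpha) / Rpower (INR s) alpha) /\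
  (alpha * (1 - alpha) / Rpower (INR s + 2) (alpha + 1)
     < a_coef alpha s - a_coef alpha (S s)
     < alpha * (1 - alpha) / Rpower (INR s) (alpha + 1)) /\
  (alpha * (1 - alpha) / (12 * Rpower (INR s + 1) (alpha + 1)) < b_coef alpha s
     < alpha * (1 - alpha) / (12 * Rpower (INR s) (alpha + 1))).
Proof.
  intros Ha Hs.
  assert (Hs0 : 0 < INR s) by (apply lt_0_INR; lia).
  rewrite !a_coef_phi_difference, b_coef_trapezoid_error by lia.
  rewrite S_INR. replace (INR s + 1 + 1) with (INR s + 2) by ring.
  split; [|split].
  - apply forward_difference_phi_bounds; assumption.
  - apply second_difference_phi_bounds; assumption.
  - apply trapezoid_error_phi_bounds; assumption.
Qed.
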